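(* The span of the parallel adaptive mergesort is $O(\lg^3 n)$ on inputs of size $n$, in the binary-fork-join model.
   Context: Binary-fork-join model: a process may fork two children that run in parallel, the parent resuming when both complete; span is the length of the longest dependence path. The parallel adaptive mergesort splits the input into two halves, sorts them recursively in parallel, and merges the resulting trees with mergeHT: if $T_1$ is empty return $T_2$; if $T_2$ is empty return $T_1$; otherwise let $k$ be the root key of $T_1$ (chosen so that it cuts off at least a constant fraction of the keys of $T_1$ on each side); $(L_2,R_2)=\mathrm{split}(T_2,k)$; $k_1=\max(L_2)$, $k_2=\min(R_2)$; $(L_1,I)=\mathrm{split}(T_1,k_1)$; $(M,R_1)=\mathrm{split}(I,k_2)$; in parallel $T_L=\mathrm{mergeHT}(L_1,L_2)$, $T_R=\mathrm{mergeHT}(R_1,R_2)$; return $\mathrm{join}(\mathrm{join}(T_L,M),T_R)$. Trees are heterogeneous finger search trees, for which $\mathrm{split}$ (into keys less than / greater than a given key) and $\mathrm{join}$ (of two trees with non-interleaving key ranges) take worst-case time $O(\lg\max(|T_1|,|T_2|))$. *)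

From HB Require Import structures.
From mathcomp Require Import all_boot all_order.
Import Order.TTheory.

Set Implicit Arguments.
Unset Strict Implicit.
Unset Printing Implicit Defensive.

Local Open Scope order_scope.

Definition lg (n : nat) : nat := trunc_log 2 n.

Section Alg.
Context {disp : Order.disp_t} {K : orderType disp}.

(* A tree is represented by (the sequence of) its keys; only its key set
   and size matter for the cost analysis. *)

(* worst-case cost of a split/join whose two trees have sizes a and b:
   c * (lg (max a b) + 1), i.e. O(lg max(|T1|,|T2|)) with constant c. *)
Definition op_cost (c a b : nat) : nat := (c * (lg (maxn a b)).+1)%N.

Definition splitL (T : seq K) (k : K) : seq K := [seq x <- T | x < k].
Definition splitR (T : seq K) (k : K) : seq K := [seq x <- T | k < x].

(* maximum / minimum key of a tree, None for the empty tree
   (standing for -oo / +oo respectively) *)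
Definition tmax (T : seq K) : option K :=
  if T is x :: xs then Some (foldl Order.max x xs) else None.
Definition tmin (T : seq K) : option K :=
  if T is x :: xs then Some (foldl Order.min x xs) else None.

(* split at an optional key: None = -oo for the low split, +oo for the high *)
Definition splitL_lo (T : seq K) (k : option K) : seq K :=
  if k is Some k then splitL T k else [::].
Definition splitR_lo (T : seq K) (k : option K) : seq K :=
  if k is Some k then splitR T k else T.
Definition splitL_hi (T : seq K) (k : option K) : seq K :=
  if k is Some k then splitL T k else T.
Definition splitR_hi (T : seq K) (k : option K) : seq K :=
  if k is Some k then splitR T k else [::].

Definition good_root (d : nat) (T : seq K) (k : K) : Prop :=
  k \in T /\ (d * size (splitL T k) <= (d - 1) * size T)%N
          /\ (d * size (splitR T k) <= (d - 1) * size T)%N.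

(* mspan d c T1 T2 s : some execution of mergeHT(T1,T2) has span s.
   Every constant-time step costs 1 (also fork/join overhead);
   split/join cost op_cost; the two recursive calls run in parallel,
   so their spans combine by max.  The root key is any key allowed by
   good_root (nondeterminism covers every admissible tree shape). *)
Inductive mspan (d c : nat) : seq K -> seq K -> nat -> Prop :=
| ms_nil1 (T2 : seq K) : mspan d c [::] T2 1
| ms_nil2 (T1 : seq K) : T1 != [::] -> mspan d c T1 [::] 1
| ms_node (T1 T2 : seq K) (k : K) (sL sR : nat) :
    T1 != [::] -> T2 != [::] -> good_root d T1 k ->
    mspan d c (splitL_lo T1 (tmax (splitL T2 k))) (splitL T2 k) sL ->
    mspan d c (splitR_hi (splitR_lo T1 (tmax (splitL T2 k))) (tmin (splitR T2 k)))
              (splitR T2 k) sR ->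
    let L2 := splitL T2 k in
    let R2 := splitR T2 k in
    let L1 := splitL_lo T1 (tmax L2) in
    let I := splitR_lo T1 (tmax L2) in
    let M := splitL_hi I (tmin R2) in
    let R1 := splitR_hi I (tmin R2) in
    mspan d c T1 T2
      (1 + op_cost c (size L2) (size R2)
         + op_cost c (size L1) (size I)
         + op_cost c (size M) (size R1)
         + maxn sL sR
         + op_cost c (size L1 + size L2) (size M)
         + op_cost c (size L1 + size L2 + size M) (size R1 + size R2))%N.

(* sspan d c s sp : some execution of the parallel adaptive mergesort on the
   input sequence s has span sp. *)
Inductive sspan (d c : nat) : seq K -> nat -> Prop :=
| ss_base (s : seq K) : (size s <= 1)%N -> sspan d c s 1
| ss_rec (s : seq K) (a b m : nat) :
    (1 < size s)%N ->
    sspan d c (take (size s)./2 s) a ->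
    sspan d c (drop (size s)./2 s) b ->
    mspan d c (take (size s)./2 s) (drop (size s)./2 s) m ->
    sspan d c s (1 + maxn a b + m)%N.

End Alg.

(* Each recursive call of mergeHT keeps at most a (1 - 1/d) fraction of the
   keys of its first tree: the root key k cuts off a 1/d fraction on either
   side, and the new first trees lie strictly on one side of k.  Hence
   |T1| (d-1)^t < d^t bounds the recursion depth by t, and since
   (1 - 1/d)^d <= 1/2, depth d (lg N + 1) suffices.  Every level costs
   O(lg N) for its splits and joins, so mergeHT has span O(lg^2 N).  The
   mergesort recursion halves its input, so it has lg n + 1 levels, each
   dominated by one merge: span O(lg^3 n). *)

From HB Require Import structures.
From mathcomp Require Import all_boot all_order.
From mathcomp Require Import zify.
Import Order.TTheory.

Set Implicit Arguments.
Unset Strict Implicit.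
Unset Printing Implicit Defensive.

Lemma mem_foldl_sel (T : eqType) (f : T -> T -> T) :
  (forall x y, f x y = x \/ f x y = y) -> forall xs x, foldl f x xs \in x :: xs.
Proof.
move=> f_sel; elim=> [|y ys IH] x /=; first exact: mem_head.
have := IH (f x y); rewrite !inE.
by case: (f_sel x y) => ->; case/orP=> ->; rewrite ?orbT.
Qed.

Section Splits.
Context {disp : Order.disp_t} {K : orderType disp}.
Implicit Types (T : seq K) (k m : K) (o : option K).

Lemma tmax_mem T m : tmax T = Some m -> m \in T.
Proof.
case: T => //= x xs [<-]; apply: mem_foldl_sel => a b.
by rewrite /Order.max; case: ifP; auto.
Qed.

Lemma tmin_mem T m : tmin T = Some m -> m \in T.
Proof.
case: T => //= x xs [<-]; apply: mem_foldl_sel => a b.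
by rewrite /Order.min; case: ifP; auto.
Qed.

Lemma size_splitL T k : size (splitL T k) <= size T.
Proof. by rewrite size_filter count_size. Qed.

Lemma size_splitR T k : size (splitR T k) <= size T.
Proof. by rewrite size_filter count_size. Qed.

Lemma size_splitLR T k : size (splitL T k) + size (splitR T k) <= size T.
Proof.
rewrite !size_filter -count_predUI (@eq_count _ (predI _ _) pred0) => [|x /=].
  by rewrite count_pred0 addn0 count_size.
by rewrite lt_asym.
Qed.

Lemma size_splitLR_lo T o : size (splitL_lo T o) + size (splitR_lo T o) <= size T.
Proof. by case: o => [k|] //=; apply: size_splitLR. Qed.

Lemma splitR_lo_subseq T o : subseq (splitR_lo T o) T.
Proof. by case: o => [k|] /=; rewrite ?filter_subseq. Qed.

Lemma size_splitL_hi T o : size (splitL_hi T o) <= size T.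
Proof. by case: o => [k|] //=; apply: size_splitL. Qed.

Lemma size_splitR_hi T o : size (splitR_hi T o) <= size T.
Proof. by case: o => [k|] //=; apply: size_splitR. Qed.

Lemma size_splitL_lo_tmax T1 T2 k :
  size (splitL_lo T1 (tmax (splitL T2 k))) <= size (splitL T1 k).
Proof.
case E: tmax => [m|] //=.
have /tmax_mem := E; rewrite mem_filter => /andP [mk _].
by rewrite !size_filter; apply: sub_count => x /= xm; apply: lt_trans xm mk.
Qed.

Lemma size_splitR_hi_tmin T1 T2 o k :
  size (splitR_hi (splitR_lo T1 o) (tmin (splitR T2 k))) <= size (splitR T1 k).
Proof.
case E: tmin => [m|] //=.
have /tmin_mem := E; rewrite mem_filter => /andP [km _].
rewrite /splitR !size_filter (leq_trans (leq_count_subseq _ (splitR_lo_subseq T1 o))) //.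
by apply: sub_count => x /= mx; apply: lt_trans km mx.
Qed.

End Splits.

Lemma op_cost_le c a b N : a <= N -> b <= N -> op_cost c a b <= c * (lg N).+1.
Proof.
move=> le_aN le_bN; rewrite leq_mul2l ltnS leq_trunc_log ?orbT //.
by rewrite geq_max le_aN le_bN.
Qed.

Lemma lg_le_pow2 n j : n <= 2 ^ j -> lg n <= j.
Proof. by move=> le_n; rewrite -(@trunc_expnK 2 j) // leq_trunc_log. Qed.

Lemma potential_shrink p q a b t : 0 < q -> q * a <= p * b ->
  b * p ^ t.+1 < q ^ t.+1 -> a * p ^ t < q ^ t.
Proof.
move=> q_gt0 le_qa lt_b; rewrite -(ltn_pmul2l q_gt0) -expnS.
by apply: leq_ltn_trans lt_b; rewrite expnS mulnA mulnCA mulnA leq_mul2r le_qa orbT.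
Qed.

Lemma bernoulli_expn e n : e ^ n.+1 + n.+1 * e ^ n <= e.+1 ^ n.+1.
Proof.
elim: n => [|n IH]; first by rewrite expn1 expn0 muln1 addn1.
rewrite [e.+1 ^ n.+2]expnS (leq_trans _ (leq_mul (leqnn e.+1) IH)) //.
rewrite !expnS; nia.
Qed.

Lemma double_expn_pred_le d : 0 < d -> 2 * (d - 1) ^ d <= d ^ d.
Proof.
case: d => // e _; rewrite subn1 /=; apply: leq_trans (bernoulli_expn e e).
by rewrite mul2n -addnn leq_add2l expnS leq_mul2r leqnSn orbT.
Qed.

Lemma pow2_potential d n L : 1 < d -> n < 2 ^ L ->
  n * (d - 1) ^ (d * L) < d ^ (d * L).
Proof.
move=> d_gt1; case: L => [|L] n_lt; first by rewrite muln0 !expn0 muln1 in n_lt *.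
have pos : 0 < (d - 1) ^ (d * L.+1) by rewrite expn_gt0 subn_gt0 d_gt1.
rewrite (leq_trans (_ : _ < 2 ^ L.+1 * (d - 1) ^ (d * L.+1))) ?ltn_pmul2r //.
rewrite mulnC !expnM -expnMn mulnC leq_exp2r //.
exact/double_expn_pred_le/ltnW.
Qed.

Section Span.
Context {disp : Order.disp_t} {K : orderType disp}.
Variables d c : nat.

Lemma mspan_depth_bound (T1 T2 : seq K) s : mspan d c T1 T2 s -> forall t,
  size T1 * (d - 1) ^ t < d ^ t ->
  s <= 1 + t * ((5 * c + 1) * (lg (size T1 + size T2)).+1).
Proof.
elim=> {T1 T2 s} [T2|T1 _|T1 T2 k sL sR T1_nil _ [_ [shrinkL shrinkR]] _ IHL _ IHR];
  rewrite ?leq_addr //.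
move=> L2 R2 L1 I M R1 [|t] pot.
  by move: pot; rewrite expn0 muln1 ltnS leqn0 size_eq0 (negbTE T1_nil).
move: IHL IHR; rewrite -/L2 -/R2 -/L1 -/I -/R1 => IHL IHR.
have d_gt0 : 0 < d by case: (posnP d) pot => [->|//]; rewrite exp0n.
have L1_le : size L1 <= size (splitL T1 k) := size_splitL_lo_tmax T1 T2 k.
have R1_le : size R1 <= size (splitR T1 k) := size_splitR_hi_tmin T1 T2 _ k.
have L1I_le : size L1 + size I <= size T1 := size_splitLR_lo _ _.
have M_le : size M <= size I := size_splitL_hi _ _.
have R1_leI : size R1 <= size I := size_splitR_hi _ _.
have L2_le : size L2 <= size T2 := size_splitL _ _.
have R2_le : size R2 <= size T2 := size_splitR _ _.
set N := size T1 + size T2; set Q := (lg N).+1.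
have sL_le : sL <= 1 + t * ((5 * c + 1) * Q).
  apply: leq_trans (IHL t _) _.
    apply: potential_shrink d_gt0 _ pot.
    by apply: leq_trans shrinkL; rewrite leq_mul2l L1_le orbT.
  by rewrite leq_add2l !leq_mul2l ltnS leq_trunc_log ?orbT //; lia.
have sR_le : sR <= 1 + t * ((5 * c + 1) * Q).
  apply: leq_trans (IHR t _) _.
    apply: potential_shrink d_gt0 _ pot.
    by apply: leq_trans shrinkR; rewrite leq_mul2l R1_le orbT.
  by rewrite leq_add2l !leq_mul2l ltnS leq_trunc_log ?orbT //; lia.
have ops : op_cost c (size L2) (size R2) + op_cost c (size L1) (size I)
    + op_cost c (size M) (size R1) + op_cost c (size L1 + size L2) (size M)
    + op_cost c (size L1 + size L2 + size M) (size R1 + size R2) <= 5 * (c * Q).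
  by rewrite !mulSn mul0n addn0 !addnA; repeat apply: leq_add; apply: op_cost_le; lia.
lia.
Qed.

Hypothesis d_gt1 : 1 < d.

Lemma mspan_le (T1 T2 : seq K) s : mspan d c T1 T2 s ->
  s <= 1 + d * (5 * c + 1) * (lg (size T1 + size T2)).+1 ^ 2.
Proof.
set N := size T1 + size T2 => /mspan_depth_bound /(_ (d * (lg N).+1)).
have T1_lt : size T1 < 2 ^ (lg N).+1.
  by apply: leq_ltn_trans (trunc_log_ltn _ _); rewrite ?leq_addr.
move=> /(_ (pow2_potential d_gt1 T1_lt)); set Q := (lg N).+1.
by rewrite expnS expn1; lia.
Qed.

Lemma sspan_le (s : seq K) sp : sspan d c s sp -> forall j, size s <= 2 ^ j ->
  sp <= 1 + j * (2 + d * (5 * c + 1) * j.+1 ^ 2).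
Proof.
elim=> {s sp} [s _|s a b m s_gt1 _ IHa _ IHb merge_m] j; rewrite ?leq_addr //.
set n := size s in s_gt1 IHa IHb merge_m *.
case: j => [|j] n_le; first by move: s_gt1 n_le; rewrite expn0; lia.
set D := d * (5 * c + 1).
have n_half := odd_double_half n; have odd_le := leq_b1 (odd n).
rewrite expnS -muln2 in n_le n_half.
have size_take : size (take n./2 s) = n./2 by rewrite size_takel //; lia.
have size_drop : size (drop n./2 s) = n - n./2 by rewrite size_drop.
have a_le : a <= 1 + j * (2 + D * j.+1 ^ 2) by apply: IHa; rewrite size_take; lia.
have b_le : b <= 1 + j * (2 + D * j.+1 ^ 2) by apply: IHb; rewrite size_drop; lia.
have m_le : m <= 1 + D * j.+2 ^ 2.
  apply: leq_trans (mspan_le merge_m) _.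
  rewrite -size_cat cat_take_drop -/n -/D leq_add2l leq_mul2l leq_exp2r //.
  by rewrite ltnS lg_le_pow2 ?expnS ?orbT.
have le_sq : j * (D * j.+1 ^ 2) <= j * (D * j.+2 ^ 2).
  by rewrite leq_mul2l leq_mul2l leq_exp2r // leqnSn !orbT.
lia.
Qed.

End Span.

Lemma poly3_le_cube D x : 0 < x ->
  1 + x.+1 * (2 + D * x.+2 ^ 2) <= (1 + 2 * (2 + 9 * D)) * x ^ 3.
Proof.
move=> x_gt0; have le_x1 : x.+1 <= 2 * x by lia.
have x2_gt0 : 0 < x ^ 2 by rewrite expn_gt0 x_gt0.
have le_sq : x.+2 ^ 2 <= 9 * x ^ 2.
  by rewrite -[9]/(3 ^ 2) -expnMn leq_exp2r //; lia.
have le_factor : 2 + D * x.+2 ^ 2 <= (2 + 9 * D) * x ^ 2.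
  by rewrite mulnDl leq_add ?leq_pmulr // (mulnC 9) -mulnA leq_mul2l le_sq orbT.
have := leq_mul le_x1 le_factor.
by rewrite (expnS x 2); lia.
Qed.

Theorem lemma10 (disp : Order.disp_t) (K : orderType disp) (d c : nat) :
  (2 <= d)%N ->
  exists C : nat, forall (s : seq K) (sp : nat),
    uniq s -> (2 <= size s)%N -> sspan d c s sp ->
    (sp <= C * (lg (size s)) ^ 3)%N.
Proof.
move=> d_gt1; exists (1 + 2 * (2 + 9 * (d * (5 * c + 1)))) => s sp _ s_ge2 span_s.
have : size s <= 2 ^ (lg (size s)).+1 by apply/ltnW/trunc_log_ltn.
move/(sspan_le d_gt1 span_s)/leq_trans; apply.
by apply/poly3_le_cube/trunc_log_max.
Qed.
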